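(* Fix parameters $\tau\in(0,1/100)$ and $M\ge2$, and let $\theta=2+\tau$. Let $G$ be a non-trivial and structured GCD graph with set of primes $\mathcal{P}$ such that \[ \mathcal{R}(G)\subseteq\{p> C_6\} \quad\text{and}\quad \mathcal{R}_+(G)\neq\emptyset. \] Then there is a denominator-exact GCD subgraph $G'$ of $G$ with multiplicative data $(\mathcal{P}',f',g')$ such that: (a) $G'$ is non-trivial and maximal; (b) $\mathcal{P}\subsetneq\mathcal{P}'\subseteq \mathcal{P}\cup \mathcal{R}_+(G)$, $\mathcal{R}_+(G')\subsetneq \mathcal{R}_+(G)$, and $\mathcal{R}_-(G')\subseteq \mathcal{R}_-(G)$; (c) $f'(p)\ge0$ and $g'(p)\ge0$ for all $p\in\mathcal{P}'\setminus\mathcal{P}$; (d) $q(G')\geqslant q(G)\prod_{p\in\mathcal{P}'\setminus\mathcal{P}} (1-\mathbbm{1}_{f'(p)=g'(p)>0}/p)^2 (1-1/p^{1+\frac{\tau}{4}})$.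
   Context: For a prime $p$, $k\in\mathbb{Z}$ and $\rho\in\mathbb{Q}_{>0}$, write $\operatorname{e}_p(\rho)=k$ if $\rho=p^ka/q$ with $a,q\in\mathbb{N}$, $p\nmid aq$. For real $t$, $t^+=\max\{t,0\}$, $t^-=\max\{-t,0\}$. Weighted bipartite graph: $(\mu,\mathcal{V},\mathcal{W},\mathcal{E})$ with $\mu:\mathbb{R}_{>0}\to\mathbb{R}_{>0}$, $\mathcal{V},\mathcal{W}$ finite sets of positive reals, $\mathcal{E}\subseteq\mathcal{V}\times\mathcal{W}$; $\mu(\mathcal{T})=\sum_{t\in\mathcal{T}}\mu(t)$, $\mu(\mathcal{E})=\sum_{(v,w)\in\mathcal{E}}\mu(v)\mu(w)$; edge density $\delta=\mu(\mathcal{E})/(\mu(\mathcal{V})\mu(\mathcal{W}))$ if $\mathcal{E}\neq\emptyset$, else $0$; $\mu^{(\theta)}=\delta^\theta\mu(\mathcal{V})\mu(\mathcal{W})$. A subgraph has $\mathcal{V}'\subseteq\mathcal{V}$, $\mathcal{W}'\subseteq\mathcal{W}$, $\mathcal{E}'\subseteq\mathcal{E}\cap(\mathcal{V}'\times\mathcal{W}')$, same $\mu$. ''Maximal'' means $\mu^{(\theta)}(G)\ge\mu^{(\theta)}(G')$ for every subgraph $G'$ (with $\theta=2+\tau$). GCD graph: a septuple $G=(\mu,\mathcal{V},\mathcal{W},\mathcal{E},\mathcal{P},f,g)$ where $(\mu,\mathcal{V},\mathcal{W},\mathcal{E})$ is a weighted bipartite graph with $\mathcal{V},\mathcal{W}\subset\mathbb{Q}_{>0}$,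 $\mathcal{P}$ is a set of primes (its ''set of primes''; $(\mathcal{P},f,g)$ is its ''multiplicative data''), $f,g:\mathcal{P}\to\mathbb{Z}$, and for all $p\in\mathcal{P}$ and all $(a/q,b/r)\in\mathcal{V}\times\mathcal{W}$ with $\gcd(a,q)=\gcd(b,r)=1$: $p^{f^+(p)}\mid a$, $p^{g^+(p)}\mid b$, $p^{f^-(p)}\mid q$, $p^{g^-(p)}\mid r$, and if $(a/q,b/r)\in\mathcal{E}$ then the exact power of $p$ dividing $\gcd(a,b)$ is $p^{\min\{f^+(p),g^+(p)\}}$ and that dividing $\gcd(q,r)$ is $p^{\min\{f^-(p),g^-(p)\}}$. $G$ is non-trivial if $\mathcal{E}\neq\emptyset$. Quality: $q(G)=\mu^{(\theta)}(G)\prod_{p\in\mathcal{P}}p^{|f(p)-g(p)|}$. A GCD subgraph $G'=(\mu,\mathcal{V}',\mathcal{W}',\mathcal{E}',\mathcal{P}',f',g')$ of $G$ has $\mathcal{V}'\subseteq\mathcal{V}$, $\mathcal{W}'\subseteq\mathcal{W}$, $\mathcal{E}'\subseteq\mathcal{E}$, $\mathcal{P}'\supseteq\mathcal{P}$, $f'|_{\mathcal{P}}=f$, $g'|_{\mathcal{P}}=g$. It is denominator-exact if for every $p\in\mathcal{P}'\setminus\mathcal{P}$ and every $(a/q,b/r)\in\mathcal{V}'\times\mathcal{W}'$ with $\gcd(a,q)=\gcd(b,r)=1$, $p^{f'^-(p)}$ exactly divides $q$ and $p^{g'^-(p)}$ exactly divides $r$. $\mathcal{R}(G)$ is the set of primes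 $p\notin\mathcal{P}$ for which there is $(a/q,b/r)\in\mathcal{E}$ with $\gcd(a,q)=\gcd(b,r)=1$ and $p\mid\gcd(a,b)\gcd(q,r)$. $G$ is structured if for each $p\in\mathcal{R}(G)$ there is $k_p\in\mathbb{Z}$ with $(\operatorname{e}_p(v)-k_p,\operatorname{e}_p(w)-k_p)\in\{(-1,0),(0,-1),(0,0),(0,1),(1,0)\}$ for all $(v,w)\in\mathcal{E}$. For structured $G$, $\mathcal{R}_+(G)$ is the set of $p\in\mathcal{R}(G)$ with $\operatorname{e}_p(v)\ge0$ and $\operatorname{e}_p(w)\ge0$ for all $(v,w)\in\mathcal{E}$, and $\mathcal{R}_-(G)$ is the set of $p\in\mathcal{R}(G)$ with $\operatorname{e}_p(v)\le0$ and $\operatorname{e}_p(w)\le0$ for all $(v,w)\in\mathcal{E}$. Constants: $C_1=10^4/\tau$, $C_2=10MC_1^3$, $C_4=10^{10}M^2C_2^2$, $C_6=\max\{C_4,10^4MC_2,C_2^{10/\tau}\}$. *)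

From HB Require Import structures.
From mathcomp Require Import all_boot all_order all_algebra.
From mathcomp Require Import finmap.
From mathcomp Require Import reals exp.

Set Implicit Arguments.
Unset Strict Implicit.
Unset Printing Implicit Defensive.

Import Order.TTheory GRing.Theory Num.Theory.

Local Open Scope ring_scope.
Local Open Scope fset_scope.

Definition ipos (z : int) : nat := match z with Posz n => n | Negz _ => 0%N end.
Definition ineg (z : int) : nat := match z with Posz _ => 0%N | Negz n => n.+1 end.

Definition qnum (r : rat) : nat := absz (numq r).
Definition qden (r : rat) : nat := absz (denq r).

(* e_p(r) = k  iff  r = p^k a/q with p \nmid aq *)
Definition ep (p : nat) (r : rat) : int :=
  (logn p (qnum r))%:Z - (logn p (qden r))%:Z.

Definition exdiv (p k n : nat) : Prop := (p ^ k %| n)%N /\ ~~ (p ^ k.+1 %| n)%N.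

Record gcd_graph (R : realType) := GCDGraph {
  gmu : R -> R;
  gV : {fset rat};
  gW : {fset rat};
  gE : {fset (rat * rat)};
  gP : {fset nat};
  gf : nat -> int;
  gg : nat -> int
}.

Section GCDGraphs.
Variable R : realType.
Implicit Types (G : gcd_graph R).

Definition muT G (T : {fset rat}) : R := \sum_(t <- T) gmu G (ratr t).
Definition muE G (E : {fset (rat * rat)}) : R :=
  \sum_(e <- E) (gmu G (ratr e.1) * gmu G (ratr e.2)).

Definition density (mu : R -> R) (V W : {fset rat}) (E : {fset (rat * rat)}) : R :=
  if E == fset0 then 0
  else (\sum_(e <- E) (mu (ratr e.1) * mu (ratr e.2))) /
       ((\sum_(t <- V) mu (ratr t)) * (\sum_(t <- W) mu (ratr t))).

Definition mutheta (theta : R) (mu : R -> R) (V W : {fset rat})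
    (E : {fset (rat * rat)}) : R :=
  (density mu V W E) `^ theta *
  ((\sum_(t <- V) mu (ratr t)) * (\sum_(t <- W) mu (ratr t))).

Definition mu_theta (theta : R) G : R := mutheta theta (gmu G) (gV G) (gW G) (gE G).

Definition is_wbg (mu : R -> R) (V W : {fset rat}) (E : {fset (rat * rat)}) : Prop :=
  (forall x : R, 0 < x -> 0 < mu x) /\
  (forall t, t \in V -> 0 < t) /\ (forall t, t \in W -> 0 < t) /\
  (forall e, e \in E -> (e.1 \in V) && (e.2 \in W)).

Definition is_gcd_graph G : Prop :=
  is_wbg (gmu G) (gV G) (gW G) (gE G) /\
  (forall p, p \in gP G -> prime p) /\
  (forall p, p \in gP G -> forall v w, v \in gV G -> w \in gW G ->
     [/\ (p ^ ipos (gf G p) %| qnum v)%N, (p ^ ipos (gg G p) %| qnum w)%N,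
         (p ^ ineg (gf G p) %| qden v)%N, (p ^ ineg (gg G p) %| qden w)%N &
         ((v, w) \in gE G ->
            exdiv p (minn (ipos (gf G p)) (ipos (gg G p))) (gcdn (qnum v) (qnum w)) /\
            exdiv p (minn (ineg (gf G p)) (ineg (gg G p))) (gcdn (qden v) (qden w)))]).

Definition nontrivial G : Prop := gE G != fset0.

Definition quality (theta : R) G : R :=
  mu_theta theta G * \prod_(p <- gP G) (p%:R ^+ absz (gf G p - gg G p)).

Definition maximal (theta : R) G : Prop :=
  forall (V' W' : {fset rat}) (E' : {fset (rat * rat)}),
    V' `<=` gV G -> W' `<=` gW G ->
    (forall e, e \in E' -> [&& e \in gE G, e.1 \in V' & e.2 \in W']) ->
    mutheta theta (gmu G) V' W' E' <= mu_theta theta G.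

Definition gcd_subgraph (G' G : gcd_graph R) : Prop :=
  is_gcd_graph G' /\ gmu G' = gmu G /\
  gV G' `<=` gV G /\ gW G' `<=` gW G /\ gE G' `<=` gE G /\ gP G `<=` gP G' /\
  (forall p, p \in gP G -> gf G' p = gf G p /\ gg G' p = gg G p).

Definition denominator_exact (G' G : gcd_graph R) : Prop :=
  forall p, p \in gP G' -> p \notin gP G ->
  forall v w, v \in gV G' -> w \in gW G' ->
    exdiv p (ineg (gf G' p)) (qden v) /\ exdiv p (ineg (gg G' p)) (qden w).

Definition inR G (p : nat) : Prop :=
  prime p /\ p \notin gP G /\
  exists e, e \in gE G /\
    (p %| gcdn (qnum e.1) (qnum e.2) * gcdn (qden e.1) (qden e.2))%N.

Definition structured G : Prop :=
  forall p, inR G p -> exists k : int, forall e, e \in gE G ->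
    let x := (ep p e.1 - k, ep p e.2 - k) in
    x \in [:: (-1, 0); (0, -1); (0, 0); (0, 1); (1, 0)].

Definition inRplus G (p : nat) : Prop :=
  inR G p /\ forall e, e \in gE G -> 0 <= ep p e.1 /\ 0 <= ep p e.2.
Definition inRminus G (p : nat) : Prop :=
  inR G p /\ forall e, e \in gE G -> ep p e.1 <= 0 /\ ep p e.2 <= 0.

End GCDGraphs.

Definition C1 {R : realType} (tau : R) : R := 10 ^+ 4 / tau.
Definition C2 {R : realType} (tau M : R) : R := 10 * M * (C1 tau) ^+ 3.
Definition C4 {R : realType} (tau M : R) : R := 10 ^+ 10 * M ^+ 2 * (C2 tau M) ^+ 2.
Definition C6 {R : realType} (tau M : R) : R :=
  Num.max (C4 tau M) (Num.max (10 ^+ 4 * M * C2 tau M) ((C2 tau M) `^ (10 / tau))).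

From HB Require Import structures.
From mathcomp Require Import all_boot all_order all_algebra.
From mathcomp Require Import finmap.
From mathcomp Require Import reals exp.
From mathcomp Require hoelder convex classical_sets.
From mathcomp Require Import ring lra zify.
Import Order.TTheory GRing.Theory Num.Theory.
Local Open Scope fset_scope.
Local Open Scope ring_scope.

(* Pick p in R_+(G).  Since G is structured, there is k = K + 1 >= 1 such that along every
   edge the pair of p-adic valuations is (k, k) up to one unit step.  Hence every edge lies
   in one of three pieces of G, cut out by the valuation conditions (>= k, >= k),
   (= K, >= k) and (>= k, = K); as the vertices of valuation >= k and = K are disjoint, the
   products of the vertex masses of the pieces add up to at most mu(V) mu(W).  The map
   (m, Z) |-> (m / Z)^theta Z is subadditive (convexity of x^theta), so mu^(theta)(G) is
   at most the sum of the mu^(theta) of the pieces.  Adding p with data (k, k), (K, k) or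
   (k, K) multiplies the quality by 1, p or p, and
   (1 - 1/p)^2 (1 - 1/u) + 2 (1 - 1/u) / p <= 1 for u = p^(1 + tau/4) <= p^2, so on one
   piece the quality drops by at most the factor in (d).  A maximal subgraph of that piece
   is G'. *)

Section Perspective.
Context {R : realType}.
Implicit Types th l m Z x y : R.

Lemma powR_convex {th l} x y : 1 <= th -> 0 <= l -> l <= 1 -> 0 <= x -> 0 <= y ->
  (l * x + (1 - l) * y) `^ th <= l * x `^ th + (1 - l) * y `^ th.
Proof.
move=> th1 l0 l1 x0 y0.
have := @hoelder.convex_powR R th th1 (interval_inference.Itv01 l0 l1) x y.
rewrite !convex.convRE /=.
by apply; apply: classical_sets.mem_set; rewrite /= in_itv /= andbT.
Qed.

Definition persp_powR th m Z : R := (m / Z) `^ th * Z.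

Lemma persp_powR0 th Z : 0 < th -> persp_powR th 0 Z = 0.
Proof. by move=> th0; rewrite /persp_powR mul0r powR0 ?mul0r // gt_eqF. Qed.

Lemma persp_powR_ge0 th m Z : 0 <= Z -> 0 <= persp_powR th m Z.
Proof. by move=> Z0; rewrite mulr_ge0 // powR_ge0. Qed.

Lemma persp_powR_gt0 th m Z : 0 < m -> 0 < Z -> 0 < persp_powR th m Z.
Proof. by move=> m0 Z0; rewrite mulr_gt0 // powR_gt0 // divr_gt0. Qed.

Lemma persp_powRE th m Z : 1 < th -> 0 <= m -> 0 <= Z ->
  persp_powR th m Z = m * (m / Z) `^ (th - 1).
Proof.
move=> th1 m0 Z0; rewrite /persp_powR.
have [->|Zn0] := eqVneq Z 0.
  by rewrite invr0 !mulr0 powR0 ?mulr0 // subr_eq0 gt_eqF.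
rewrite -[in LHS](subrK 1 th) [in LHS]powRD; last by rewrite subrK gt_eqF // (lt_trans ltr01).
by rewrite powRr1 ?divr_ge0 // -mulrA divfK // mulrC.
Qed.

Lemma persp_powR_le {th m m' Z Z'} : 1 < th -> 0 <= m -> m <= m' -> 0 < Z' -> Z' <= Z ->
  persp_powR th m Z <= persp_powR th m' Z'.
Proof.
move=> th1 m0 mm' Z'0 ZZ'; have Z0 := lt_le_trans Z'0 ZZ'; have m'0 := le_trans m0 mm'.
rewrite !persp_powRE ?(ltW Z0) ?(ltW Z'0) //.
have ratio_le : m / Z <= m' / Z'.
  apply: (@le_trans _ _ (m / Z')); first by rewrite ler_wpM2l // lef_pV2.
  by rewrite ler_wpM2r // invr_ge0 ltW.
apply: ler_pM => //; first exact: powR_ge0.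
by rewrite ge0_ler_powR // ?nnegrE ?subr_ge0 ?divr_ge0 ?(ltW th1) ?(ltW Z0) ?(ltW Z'0).
Qed.

Definition admissible m Z := [/\ 0 <= m, 0 <= Z & (0 < m -> 0 < Z)].

Lemma admissibleD {m1 m2 Z1 Z2} :
  admissible m1 Z1 -> admissible m2 Z2 -> admissible (m1 + m2) (Z1 + Z2).
Proof.
case=> m10 Z10 Z1P [m20 Z20 Z2P]; split; rewrite ?addr_ge0 // => m12P.
have [m1P|m1N] := ltP 0 m1; first by rewrite ltr_pwDl ?Z1P.
by rewrite ltr_wpDl ?Z2P //; lra.
Qed.

Lemma persp_powR_subadd {th m1 m2 Z1 Z2} : 1 < th -> admissible m1 Z1 -> admissible m2 Z2 ->
  persp_powR th (m1 + m2) (Z1 + Z2) <= persp_powR th m1 Z1 + persp_powR th m2 Z2.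
Proof.
move=> th1 [m10 Z10 Z1P] [m20 Z20 Z2P]; have th0 := lt_trans ltr01 th1.
move: m10 m20; rewrite ![0 <= _]le_eqVlt => /predU1P[<-|m1P] /predU1P[<-|m2P].
- by rewrite !add0r !persp_powR0 ?addr0.
- by rewrite !add0r persp_powR0 // add0r persp_powR_le ?lerDr ?Z2P // ltW.
- by rewrite !addr0 persp_powR0 // addr0 persp_powR_le ?lerDl ?Z1P // ltW.
have {}Z1P := Z1P m1P; have {}Z2P := Z2P m2P.
have ZP : 0 < Z1 + Z2 by rewrite addr_gt0.
(* the perspective of a convex function is convex: take the weight Z1 / (Z1 + Z2) *)
set l := Z1 / (Z1 + Z2).
have l0 : 0 <= l by rewrite divr_ge0 // ltW.
have l1 : l <= 1 by rewrite ler_pdivrMr // mul1r lerDl ltW.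
have := powR_convex (m1 / Z1) (m2 / Z2) (ltW th1) l0 l1
  (divr_ge0 (ltW m1P) (ltW Z1P)) (divr_ge0 (ltW m2P) (ltW Z2P)).
have -> : l * (m1 / Z1) + (1 - l) * (m2 / Z2) = (m1 + m2) / (Z1 + Z2).
  by rewrite /l; field; rewrite !gt_eqF.
rewrite -(ler_pM2r ZP) => /le_trans; apply.
have -> : 1 - l = Z2 / (Z1 + Z2) by rewrite /l; field; rewrite gt_eqF.
have cancel_sum a b : a / (Z1 + Z2) * b * (Z1 + Z2) = b * a by field; rewrite gt_eqF.
by rewrite mulrDl /l /persp_powR !cancel_sum.
Qed.

Lemma persp_powR_le_sum3 th m Z m1 m2 m3 Z1 Z2 Z3 : 1 < th -> 0 <= m ->
  m <= m1 + m2 + m3 -> Z1 + Z2 + Z3 <= Z ->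
  admissible m1 Z1 -> admissible m2 Z2 -> admissible m3 Z3 ->
  persp_powR th m Z <= persp_powR th m1 Z1 + persp_powR th m2 Z2 + persp_powR th m3 Z3.
Proof.
move=> th1 m0 mle Zle a1 a2 a3; have th0 := lt_trans ltr01 th1.
have a123 := admissibleD (admissibleD a1 a2) a3.
have [_ Z10 _] := a1; have [_ Z20 _] := a2; have [_ Z30 _] := a3; have [_ _ ZP] := a123.
move: m0; rewrite le_eqVlt => /predU1P[<-|mP].
  by rewrite persp_powR0 // !addr_ge0 ?persp_powR_ge0.
apply: le_trans (persp_powR_le th1 (ltW mP) mle (ZP (lt_le_trans mP mle)) Zle) _.
apply: le_trans (persp_powR_subadd th1 (admissibleD a1 a2) a3) _.
by rewrite lerD2r persp_powR_subadd.
Qed.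

End Perspective.

Section FilteredSums.
Context {R : numDomainType} {T : choiceType} {F : T -> R}.

Lemma sum_fset_ge0 (A : {fset T}) : {in A, forall x, 0 <= F x} -> 0 <= \sum_(x <- A) F x.
Proof. by move=> F0; rewrite big_seq sumr_ge0. Qed.

Lemma sum_fset_gt0 {A : {fset T}} {x : T} : x \in A -> 0 < F x ->
  {in A, forall x, 0 <= F x} -> 0 < \sum_(x <- A) F x.
Proof.
move=> xA Fx F0; rewrite (big_fsetD1 _ xA) /= ltr_pwDl // sum_fset_ge0 // => y.
by rewrite in_fsetD1 => /andP[_ /F0].
Qed.

Variable A : {fset T}.
Hypothesis F_ge0 : {in A, forall x, 0 <= F x}.

Lemma sum_fset_filter_disjoint (a b : pred T) : {in A, forall x, ~~ (a x && b x)} ->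
  \sum_(x <- [fset x in A | a x]) F x + \sum_(x <- [fset x in A | b x]) F x <=
  \sum_(x <- A) F x.
Proof.
move=> ab; rewrite -!big_fset_condE (big_mkcond a) (big_mkcond b) -big_split /=.
rewrite big_seq [leRHS]big_seq ler_sum // => x /[dup] /ab.
by case: (a x); case: (b x) => //= _ /F_ge0; rewrite ?add0r ?addr0.
Qed.

Lemma sum_fset_filter_cover3 (a b c : pred T) : {in A, forall x, [|| a x, b x | c x]} ->
  \sum_(x <- A) F x <= \sum_(x <- [fset x in A | a x]) F x +
    \sum_(x <- [fset x in A | b x]) F x + \sum_(x <- [fset x in A | c x]) F x.
Proof.
move=> abc; rewrite -!big_fset_condE (big_mkcond a) (big_mkcond b) (big_mkcond c).
rewrite -!big_split /=.
rewrite big_seq [leRHS]big_seq ler_sum // => x /[dup] /abc.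
case: (a x); case: (b x); case: (c x) => //= _ /F_ge0 Fx;
  by rewrite ?add0r ?addr0 ?lerDl ?lerDr ?addr_ge0 // -addrA lerDl addr_ge0.
Qed.

End FilteredSums.

Lemma seq_argmax {R : realType} {T : eqType} (F : T -> R) {s : seq T} :
  s != [::] -> exists2 x, x \in s & {in s, forall y, F y <= F x}.
Proof.
elim: s => // a [_ _|b s IH _].
  by exists a; rewrite ?mem_head // => y /[!inE] /eqP->.
have [x xs x_max] := IH isT.
have [Fax|Fxa] := leP (F a) (F x).
  exists x => [|y]; first by rewrite in_cons xs orbT.
  by rewrite in_cons => /orP[/eqP->|/x_max].
exists a => [|y]; first exact: mem_head.
by rewrite in_cons => /orP[/eqP->//|/x_max /le_trans->//]; exact: ltW.
Qed.

Definition is_subgraph (V W : {fset rat}) (E : {fset (rat * rat)})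
    (V0 W0 : {fset rat}) (E0 : {fset (rat * rat)}) : Prop :=
  [/\ V `<=` V0, W `<=` W0 & forall e, e \in E -> [&& e \in E0, e.1 \in V & e.2 \in W]].

Lemma is_subgraph_trans {V W E V1 W1 E1 V0 W0 E0} :
  is_subgraph V W E V1 W1 E1 -> is_subgraph V1 W1 E1 V0 W0 E0 -> is_subgraph V W E V0 W0 E0.
Proof.
case=> VV1 WW1 EE1 [V1V0 W1W0 E1E0].
split; rewrite ?(fsubset_trans VV1) ?(fsubset_trans WW1) //.
by move=> e /EE1 /and3P[/E1E0 /andP[-> _] -> ->].
Qed.

Lemma exists_max_subgraph {R : realType}
    (F : {fset rat} -> {fset rat} -> {fset (rat * rat)} -> R) V0 W0 E0 :
  exists V1 W1 E1, is_subgraph V1 W1 E1 V0 W0 E0 /\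
    forall V W E, is_subgraph V W E V0 W0 E0 -> F V W E <= F V1 W1 E1.
Proof.
pose subgraphb (x : {fset rat} * {fset rat} * {fset (rat * rat)}) :=
  x.2 `<=` [fset e in E0 | (e.1 \in x.1.1) && (e.2 \in x.1.2)].
pose s := [seq x <- [seq (VW, E) | VW <- [seq (V, W) | V <- fpowerset V0,
                                                        W <- fpowerset W0],
                                    E <- fpowerset E0] | subgraphb x].
have mem_s V W E : (((V, W), E) \in s) <-> is_subgraph V W E V0 W0 E0.
  rewrite mem_filter /subgraphb /=; split.
    case/andP=> EVW /allpairsP[[VW E'] [/allpairsP[[V' W'] [/= VV0 WW0 ->]] _ /= [eV eW eE]]].
    move: VV0 WW0; rewrite -eV -eW !fpowersetE => VV0 WW0; split=> // e eE0.
    by move: (fsubsetP EVW e eE0); rewrite !inE => /andP[-> /andP[-> ->]].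
  case=> VV0 WW0 EVW; apply/andP; split.
    by apply/fsubsetP => e /EVW /and3P[eE0 e1V e2W]; rewrite !inE eE0 e1V e2W.
  apply: allpairs_f; first by apply: allpairs_f; rewrite fpowersetE.
  by rewrite fpowersetE; apply/fsubsetP => e /EVW /and3P[].
have s_neq0 : s != [::].
  have : ((fset0, fset0), fset0) \in s by apply/mem_s; split; rewrite ?fsub0set // => e.
  by apply: contraTneq => ->.
have [[[V1 W1] E1] /mem_s sub1 max1] := seq_argmax (fun x => F x.1.1 x.1.2 x.2) s_neq0.
by exists V1, W1, E1; split=> // V W E /mem_s /max1.
Qed.

Section Masses.
Context {R : realType} {G : gcd_graph R}.

Lemma muthetaE th V W E :
  mutheta th (gmu G) V W E = persp_powR th (muE G E) (muT G V * muT G W).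
Proof.
rewrite /mutheta /density /persp_powR /muE.
by case: eqP => [->|//]; rewrite big_seq_fset0 mul0r.
Qed.

Lemma nontrivial_of_mu_theta_gt0 {th} : 0 < th -> 0 < mu_theta th G -> nontrivial G.
Proof.
move=> th0 pos; apply/eqP => E0; move: pos.
by rewrite /mu_theta /mutheta /density E0 eqxx powR0 ?mul0r ?ltxx // gt_eqF.
Qed.

Hypothesis gG : is_gcd_graph G.

Lemma gmu_gt0 t : 0 < t -> 0 < gmu G (ratr t).
Proof. by case: gG => -[mu_gt0 _] _ t0; rewrite mu_gt0 // ltr0q. Qed.

Lemma gV_gt0 : {in gV G, forall v, 0 < v}.
Proof. by case: gG => -[_ [+ _]] _; apply. Qed.

Lemma gW_gt0 : {in gW G, forall w, 0 < w}.
Proof. by case: gG => -[_ [_ [+ _]]] _; apply. Qed.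

Lemma gE_mem : {in gE G, forall e, e.1 \in gV G /\ e.2 \in gW G}.
Proof. by case: gG => -[_ [_ [_ Eok]]] _ e /Eok/andP. Qed.

Lemma gE_gt0 : {in gE G, forall e, 0 < e.1 /\ 0 < e.2}.
Proof. by move=> e /gE_mem[/gV_gt0 ? /gW_gt0]. Qed.

Lemma muT_ge0 {T : {fset rat}} : {in T, forall t, 0 < t} -> 0 <= muT G T.
Proof. by move=> T0; rewrite sum_fset_ge0 // => t /T0 /gmu_gt0 /ltW. Qed.

Lemma muE_ge0 {E : {fset (rat * rat)}} : {subset E <= gE G} -> 0 <= muE G E.
Proof.
move=> EG; rewrite sum_fset_ge0 // => e /EG /gE_gt0[/gmu_gt0 ? /gmu_gt0 ?].
by rewrite mulr_ge0 ?ltW.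
Qed.

Lemma muT_mul_gt0 {V W : {fset rat}} {E : {fset (rat * rat)}} :
  {in V, forall t, 0 < t} -> {in W, forall t, 0 < t} ->
  (forall e, e \in E -> e.1 \in V /\ e.2 \in W) -> 0 < muE G E -> 0 < muT G V * muT G W.
Proof.
move=> V0 W0 EVW; have [->|[e eE]] := fset_0Vmem E; first by rewrite /muE big_seq_fset0 ltxx.
have [e1V e2W] := EVW e eE; rewrite mulr_gt0 //.
  by rewrite (sum_fset_gt0 e1V) ?gmu_gt0 ?V0 // => t /V0 /gmu_gt0 /ltW.
by rewrite (sum_fset_gt0 e2W) ?gmu_gt0 ?W0 // => t /W0 /gmu_gt0 /ltW.
Qed.

Lemma mu_theta_ge0 th : 0 <= mu_theta th G.
Proof.
by rewrite /mu_theta muthetaE persp_powR_ge0 // mulr_ge0 ?(muT_ge0 gV_gt0) ?(muT_ge0 gW_gt0).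
Qed.

Lemma mu_theta_gt0 th : nontrivial G -> 0 < mu_theta th G.
Proof.
move=> /fset0Pn[e eE]; rewrite /mu_theta muthetaE.
have EG0 : 0 < muE G (gE G).
  apply: (sum_fset_gt0 eE).
    by have [/gmu_gt0 ? /gmu_gt0 ?] := gE_gt0 _ eE; rewrite mulr_gt0.
  by move=> e' /gE_gt0[/gmu_gt0 ? /gmu_gt0 ?]; rewrite mulr_ge0 ?ltW.
by rewrite persp_powR_gt0 // (muT_mul_gt0 (E := gE G) gV_gt0 gW_gt0 gE_mem).
Qed.

End Masses.

Section Valuations.
Context {p : nat}.
Hypothesis p_prime : prime p.

Lemma qnum_gt0 (v : rat) : (0 < qnum v)%N = (v != 0).
Proof. by rewrite /qnum absz_gt0 numq_eq0. Qed.

Lemma qden_gt0 (v : rat) : (0 < qden v)%N.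
Proof. by rewrite /qden absz_gt0 gt_eqF // denq_gt0. Qed.

Lemma logn_qnum_or_qden (v : rat) : logn p (qnum v) = 0%N \/ logn p (qden v) = 0%N.
Proof.
have [pd|pNd] := boolP (p %| qden v)%N; [left|right]; apply: logn_coprime.
  rewrite prime_coprime //; apply: contraL pd => pn.
  by rewrite -prime_coprime // (coprime_dvdl pn) // coprime_num_den.
by rewrite prime_coprime.
Qed.

Lemma ep_ge0E {v : rat} :
  0 <= ep p v -> ep p v = (logn p (qnum v))%:Z /\ logn p (qden v) = 0%N.
Proof. by rewrite /ep; case: (logn_qnum_or_qden v) => ->; lia. Qed.

Lemma ep_ge1 (v : rat) : 0 < v -> (p %| qnum v)%N -> 1 <= ep p v.
Proof.
move=> v0 pv; have : (0 < logn p (qnum v))%N.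
  by rewrite logn_gt0 mem_primes p_prime pv qnum_gt0 gt_eqF.
by rewrite /ep; case: (logn_qnum_or_qden v) => ->; lia.
Qed.

Lemma ep_le_N1 (v : rat) : (p %| qden v)%N -> ep p v <= -1.
Proof.
move=> pv; have : (0 < logn p (qden v))%N by rewrite logn_gt0 mem_primes p_prime pv qden_gt0.
by rewrite /ep; case: (logn_qnum_or_qden v) => ->; lia.
Qed.

Lemma ep_common_dvd (v w : rat) : 0 < v -> 0 < w ->
  (p %| gcdn (qnum v) (qnum w) * gcdn (qden v) (qden w))%N ->
  (1 <= ep p v /\ 1 <= ep p w) \/ (ep p v <= -1 /\ ep p w <= -1).
Proof.
move=> v0 w0; rewrite Euclid_dvdM // !dvdn_gcd.
case/orP=> /andP[pv pw]; [left|right].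
  by rewrite !ep_ge1.
by rewrite !ep_le_N1.
Qed.

End Valuations.

Section PrimeSets.
Context {R : realType}.
Implicit Types G : gcd_graph R.

Lemma inR_edge_sign {G p} : is_gcd_graph G -> inR G p ->
  exists2 e : rat * rat, e \in gE G &
    (1 <= ep p e.1 /\ 1 <= ep p e.2) \/ (ep p e.1 <= -1 /\ ep p e.2 <= -1).
Proof.
move=> gG [p_prime [_ [e [eE pe]]]]; exists e => //.
by have [? ?] := gE_gt0 gG _ eE; apply: ep_common_dvd.
Qed.

Lemma structured_levels {G p} : structured G -> inR G p ->
  exists k : int, {in gE G, forall e : rat * rat, `|ep p e.1 - k| + `|ep p e.2 - k| <= 1}.
Proof.
move=> sG /sG[k hk]; exists k => e /hk /=.
by rewrite !inE => /orP[|/orP[|/orP[|/orP[]]]] /eqP[]; lia.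
Qed.

Lemma structured_ge0 {G p} {e0 : rat * rat} : structured G -> inR G p -> e0 \in gE G ->
  1 <= ep p e0.1 -> 1 <= ep p e0.2 ->
  {in gE G, forall e : rat * rat, 0 <= ep p e.1 /\ 0 <= ep p e.2}.
Proof.
move=> sG pR e0E h1 h2; have [k hk] := structured_levels sG pR.
by move=> e eE; have := hk e eE; have := hk e0 e0E; lia.
Qed.

Lemma structured_le0 {G p} {e0 : rat * rat} : structured G -> inR G p -> e0 \in gE G ->
  ep p e0.1 <= -1 -> ep p e0.2 <= -1 ->
  {in gE G, forall e : rat * rat, ep p e.1 <= 0 /\ ep p e.2 <= 0}.
Proof.
move=> sG pR e0E h1 h2; have [k hk] := structured_levels sG pR.
by move=> e eE; have := hk e eE; have := hk e0 e0E; lia.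
Qed.

Lemma inR_sub {G G' p} : gE G' `<=` gE G -> gP G `<=` gP G' -> inR G' p -> inR G p.
Proof.
move=> EE PP [p_prime [pNP' [e [eE pe]]]]; split=> //; split.
  by apply: contra pNP' => /(fsubsetP PP).
by exists e; split=> //; apply: (fsubsetP EE).
Qed.

Lemma inRplus_ge0 {G p} :
  inRplus G p -> {in gE G, forall e : rat * rat, 0 <= ep p e.1 /\ 0 <= ep p e.2}.
Proof. by case=> _ + e => /(_ e). Qed.

Lemma inRminus_le0 {G p} :
  inRminus G p -> {in gE G, forall e : rat * rat, ep p e.1 <= 0 /\ ep p e.2 <= 0}.
Proof. by case=> _ + e => /(_ e). Qed.

Lemma inRplus_sub {G G' p} : is_gcd_graph G' -> structured G ->
  gE G' `<=` gE G -> gP G `<=` gP G' -> inRplus G' p -> inRplus G p.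
Proof.
move=> gG' sG EE PP pR'; have pR := inR_sub EE PP pR'.1; split=> //.
have [e eE' [[h1 h2]|[h1 h2]]] := inR_edge_sign gG' pR'.1.
  exact: (structured_ge0 sG pR (fsubsetP EE _ eE')).
by have := inRplus_ge0 pR' _ eE'; lia.
Qed.

Lemma inRminus_sub {G G' p} : is_gcd_graph G' -> structured G ->
  gE G' `<=` gE G -> gP G `<=` gP G' -> inRminus G' p -> inRminus G p.
Proof.
move=> gG' sG EE PP pR'; have pR := inR_sub EE PP pR'.1; split=> //.
have [e eE' [[h1 h2]|[h1 h2]]] := inR_edge_sign gG' pR'.1.
  by have := inRminus_le0 pR' _ eE'; lia.
exact: (structured_le0 sG pR (fsubsetP EE _ eE')).
Qed.

Lemma inRplus_level {G p} : is_gcd_graph G -> structured G -> inRplus G p ->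
  exists K : nat,
    {in gE G, forall e : rat * rat, `|ep p e.1 - K.+1%:Z| + `|ep p e.2 - K.+1%:Z| <= 1}.
Proof.
move=> gG sG pRp; have [k hk] := structured_levels sG pRp.1.
have [e eE [[h1 h2]|[h1 h2]]] := inR_edge_sign gG pRp.1; last first.
  by have := inRplus_ge0 pRp _ eE; lia.
have k_ge1 : 1 <= k by have := hk e eE; lia.
by exists (absz k).-1; have -> : (absz k).-1.+1%:Z = k by lia.
Qed.

End PrimeSets.

Definition restrict (p : nat) (s : pred int) (T : {fset rat}) : {fset rat} :=
  [fset t in T | s (ep p t)].

Definition restrict_edges (p : nat) (sv sw : pred int) (E : {fset (rat * rat)}) :
  {fset (rat * rat)} := [fset e in E | sv (ep p e.1) && sw (ep p e.2)].

Definition mu_theta_restrict {R : realType} (th : R) (G : gcd_graph R) p sv sw : R :=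
  mutheta th (gmu G) (restrict p sv (gV G)) (restrict p sw (gW G))
    (restrict_edges p sv sw (gE G)).

Lemma near_level_cases (K : nat) (a b : int) : `|a - K.+1%:Z| + `|b - K.+1%:Z| <= 1 ->
  [|| (K.+1%:Z <= a) && (K.+1%:Z <= b), (a == K%:Z) && (K.+1%:Z <= b)
    | (K.+1%:Z <= a) && (b == K%:Z)].
Proof. lia. Qed.

Section Restriction.
Context {R : realType} {G : gcd_graph R}.
Hypothesis gG : is_gcd_graph G.
Context {p : nat}.

Lemma restrict_gt0 s {T : {fset rat}} :
  {in T, forall t, 0 < t} -> {in restrict p s T, forall t, 0 < t}.
Proof. by move=> T0 t /[!inE] /andP[/T0]. Qed.

Lemma restrict_admissible sv sw :
  admissible (muE G (restrict_edges p sv sw (gE G)))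
    (muT G (restrict p sv (gV G)) * muT G (restrict p sw (gW G))).
Proof.
have V0 := restrict_gt0 sv (gV_gt0 gG); have W0 := restrict_gt0 sw (gW_gt0 gG).
split; first by apply: (muE_ge0 gG) => e /[!inE] /andP[].
  by rewrite mulr_ge0 ?(muT_ge0 gG).
apply: (muT_mul_gt0 gG V0 W0) => e /[!inE] /andP[/(gE_mem gG)[e1V e2W] /andP[sv1 sw2]].
by rewrite e1V e2W sv1 sw2.
Qed.

Lemma restrict_is_subgraph sv sw :
  let V := restrict p sv (gV G) in let W := restrict p sw (gW G) in
  let E := restrict_edges p sv sw (gE G) in is_subgraph V W E V W E.
Proof.
split=> // e eE; rewrite eE; move: eE; rewrite !inE => /andP[/(gE_mem gG)[-> ->]].
by case/andP=> -> ->.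
Qed.

Context {K : nat}.
Hypothesis levels :
  {in gE G, forall e : rat * rat, `|ep p e.1 - K.+1%:Z| + `|ep p e.2 - K.+1%:Z| <= 1}.

Lemma mu_theta_level_split {th} : 1 < th ->
  mu_theta th G <= mu_theta_restrict th G p (>= K.+1%:Z) (>= K.+1%:Z) +
    mu_theta_restrict th G p (pred1 K%:Z) (>= K.+1%:Z) +
    mu_theta_restrict th G p (>= K.+1%:Z) (pred1 K%:Z).
Proof.
move=> th1; rewrite /mu_theta /mu_theta_restrict !muthetaE.
apply: persp_powR_le_sum3 (restrict_admissible _ _) (restrict_admissible _ _)
  (restrict_admissible _ _) => //.
- exact: (muE_ge0 gG).
- apply: sum_fset_filter_cover3 => [e /(gE_gt0 gG)[/(gmu_gt0 gG) ? /(gmu_gt0 gG) ?]|e eE].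
    by rewrite mulr_ge0 ?ltW.
  exact: near_level_cases (levels e eE).
have mass_le (T : {fset rat}) : {in T, forall t, 0 < t} ->
    muT G (restrict p (>= K.+1%:Z) T) + muT G (restrict p (pred1 K%:Z) T) <= muT G T.
  move=> T0; apply: sum_fset_filter_disjoint => [t /T0 /(gmu_gt0 gG) /ltW //|t _].
  by rewrite /=; lia.
have mass_ge0 s (T : {fset rat}) : {in T, forall t, 0 < t} -> 0 <= muT G (restrict p s T).
  by move=> /(restrict_gt0 s) /(muT_ge0 gG).
have := mass_le _ (gV_gt0 gG); have := mass_le _ (gW_gt0 gG).
have := mass_ge0 (>= K.+1%:Z) _ (gV_gt0 gG); have := mass_ge0 (pred1 K%:Z) _ (gV_gt0 gG).
have := mass_ge0 (>= K.+1%:Z) _ (gW_gt0 gG); have := mass_ge0 (pred1 K%:Z) _ (gW_gt0 gG).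
nra.
Qed.

End Restriction.

Lemma exdiv_logn p n : prime p -> (0 < n)%N -> exdiv p (logn p n) n.
Proof. by move=> p_prime n0; rewrite /exdiv !pfactor_dvdn // leqnn ltnn. Qed.

Definition set_at (h : nat -> int) (p : nat) (k : int) : nat -> int :=
  fun q => if q == p then k else h q.

Definition extend {R : realType} (G : gcd_graph R) (p i j : nat) V W E : gcd_graph R :=
  GCDGraph (gmu G) V W E (p |` gP G) (set_at (gf G) p i) (set_at (gg G) p j).

(* [f'(p) = i] and [g'(p) = j] are valid multiplicative data on the part of [G] whose
   [p]-adic valuations satisfy [sv] and [sw]. *)
Definition valuation_data {R : realType} (G : gcd_graph R) p (sv sw : pred int)
    (i j : nat) : Prop :=
  [/\ forall x, sv x -> i%:Z <= x, forall x, sw x -> j%:Z <= x &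
      {in gE G, forall e : rat * rat, sv (ep p e.1) -> sw (ep p e.2) ->
         Num.min (ep p e.1) (ep p e.2) = (minn i j)%:Z}].

Section Extension.
Context {R : realType} {G : gcd_graph R} {p i j : nat} {sv sw : pred int}.
Hypotheses (gG : is_gcd_graph G) (p_prime : prime p) (pNP : p \notin gP G).
Hypothesis data : valuation_data G p sv sw i j.
Context {V W : {fset rat}} {E : {fset (rat * rat)}}.
Hypothesis sub : is_subgraph V W E (restrict p sv (gV G)) (restrict p sw (gW G))
  (restrict_edges p sv sw (gE G)).

Let G' := extend G p i j V W E.

Lemma set_at_eq h k : set_at h p k p = k.
Proof. by rewrite /set_at eqxx. Qed.

Lemma set_at_id h k q : q \in gP G -> set_at h p k q = h q.
Proof. by move=> qP; rewrite /set_at ifN //; apply: contraNneq pNP => <-. Qed.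

Lemma restrict_logn {v : rat} {s : pred int} {k : nat} {T : {fset rat}} :
  (forall x, s x -> k%:Z <= x) -> v \in restrict p s T ->
  [/\ v \in T, ep p v = (logn p (qnum v))%:Z, logn p (qden v) = 0%N
     & (k <= logn p (qnum v))%N].
Proof.
move=> s_ge /[!inE] /andP[vT /s_ge kv].
by have [evE d0] := ep_ge0E p_prime (le_trans (le0z_nat k) kv); split=> //; lia.
Qed.

Lemma extend_is_gcd_graph : is_gcd_graph G'.
Proof.
have [VV WW EE] := sub; have [svi swj minij] := data.
have [[mu_gt0 _] [P_prime P_data]] := gG.
split; [split=> //; split; [|split]|split].
- by move=> v /(fsubsetP VV) /(restrict_gt0 _ (gV_gt0 gG)).
- by move=> w /(fsubsetP WW) /(restrict_gt0 _ (gW_gt0 gG)).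
- by move=> e /EE /and3P[_ -> ->].
- by move=> q /fset1UP[->|/P_prime].
move=> q /fset1UP[->|qP] v w /(fsubsetP VV) vV /(fsubsetP WW) wW; last first.
  have vG : v \in gV G by move: vV; rewrite inE => /andP[].
  have wG : w \in gW G by move: wW; rewrite inE => /andP[].
  rewrite /= !set_at_id //; case: (P_data q qP v w vG wG) => ? ? ? ? vw_data.
  by split=> // /EE /and3P[/[!inE] /andP[/vw_data]].
rewrite /= !set_at_eq /=.
have [_ ev dv iv] := restrict_logn svi vV; have [_ ew dw jw] := restrict_logn swj wW.
have v0 : (0 < qnum v)%N by rewrite qnum_gt0 gt_eqF // (restrict_gt0 _ (gV_gt0 gG) _ vV).
have w0 : (0 < qnum w)%N by rewrite qnum_gt0 gt_eqF // (restrict_gt0 _ (gW_gt0 gG) _ wW).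
split; rewrite ?expn0 ?dvd1n ?pfactor_dvdn //.
move=> /EE /and3P[/[!inE] /andP[vwE /andP[sv1 sw2]] _ _].
have := minij _ vwE sv1 sw2; rewrite /= ev ew => min_ij.
have -> : minn i j = minn (logn p (qnum v)) (logn p (qnum w)) by lia.
have -> : minn 0 0 = logn p (gcdn (qden v) (qden w)) by rewrite logn_gcd ?qden_gt0 // dv dw.
by rewrite -logn_gcd //; split; apply: exdiv_logn; rewrite // gcdn_gt0 ?v0 ?qden_gt0.
Qed.

Lemma extend_gcd_subgraph : gcd_subgraph G' G.
Proof.
have [VV WW EE] := sub; split; first exact: extend_is_gcd_graph.
split=> //; split; last split; last split; last split.
- by apply/fsubsetP => v /(fsubsetP VV) /[!inE] /andP[].
- by apply/fsubsetP => w /(fsubsetP WW) /[!inE] /andP[].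
- by apply/fsubsetP => e /EE /and3P[/[!inE] /andP[]].
- exact: fsubsetU1.
- by move=> q qP; rewrite /G' /= !set_at_id.
Qed.

Lemma extend_denominator_exact : denominator_exact G' G.
Proof.
have [VV WW _] := sub; have [svi swj _] := data.
move=> q /fset1UP[->|qP] qNP; last by rewrite qP in qNP.
move=> v w /(fsubsetP VV) vV /(fsubsetP WW) wW; rewrite /= !set_at_eq /=.
have [_ _ dv _] := restrict_logn svi vV; have [_ _ dw _] := restrict_logn swj wW.
by rewrite -{1}dv -{1}dw; split; apply: exdiv_logn; rewrite ?qden_gt0.
Qed.

Lemma extend_new_primes : gP G' `\` gP G = [fset p].
Proof.
apply/fsetP => q; rewrite !inE /=.
by case: eqVneq => [->|_] /=; rewrite ?pNP // andNb.
Qed.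

Lemma extend_quality_ge th c :
  mu_theta th G * c <= mutheta th (gmu G) V W E * p%:R ^+ absz (i%:Z - j%:Z) ->
  quality th G * c <= quality th G'.
Proof.
move=> le_c; rewrite /quality big_fsetU1 //= !set_at_eq mulrA mulrAC.
have -> : \prod_(q <- gP G) q%:R ^+ absz (set_at (gf G) p i q - set_at (gg G) p j q) =
    \prod_(q <- gP G) q%:R ^+ absz (gf G q - gg G q) :> R.
  by apply: eq_big_seq => q qP; rewrite !set_at_id.
by apply: ler_wpM2r => //; apply: prodr_ge0 => q _; rewrite exprn_ge0.
Qed.

End Extension.

Section Loss.
Context {R : realType}.
Implicit Types (tau : R) (p : nat).

(* The factor of a new prime [p] in (d); [b] stands for [f'(p) = g'(p) > 0]. *)
Definition loss tau p (b : bool) : R :=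
  (1 - b%:R / p%:R) ^+ 2 * (1 - 1 / p%:R `^ (1 + tau / 4)).

Lemma pigeonhole3 {Q a b c x y z : R} : 0 <= Q -> Q <= a + b + c -> x + y + z <= 1 ->
  [\/ Q * x <= a, Q * y <= b | Q * z <= c].
Proof.
move=> Q0 Qabc xyz.
have [|ax] := leP (Q * x) a; first by constructor 1.
have [|bx] := leP (Q * y) b; first by constructor 2.
have [|cx] := leP (Q * z) c; first by constructor 3.
nra.
Qed.

Lemma loss_gt0 tau p b : 0 <= tau -> (1 < p)%N -> 0 < loss tau p b.
Proof.
move=> tau0 p_gt1; have P2 : 2 <= p%:R :> R by rewrite ler_nat.
have Pu : p%:R <= p%:R `^ (1 + tau / 4).
  by rewrite -{1}(powRr1 (ler0n _ p)) ler_powR ?ler1n 1?ltnW //; lra.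
rewrite mulr_gt0 // ?exprn_gt0 // subr_gt0 ltr_pdivrMr ?mul1r; try lra.
by case: b => /=; lra.
Qed.

Lemma loss_sum {tau p} : 0 <= tau <= 4 -> (1 < p)%N ->
  loss tau p true + loss tau p false / p%:R + loss tau p false / p%:R <= 1.
Proof.
move=> /andP[tau0 tau4] p_gt1; have P0 : 0 < p%:R :> R by rewrite ltr0n ltnW.
have u0 : 0 < p%:R `^ (1 + tau / 4) :> R by rewrite powR_gt0.
(* the left side is [(1 - 1/u) (1 + 1/p^2)] with [u = p^(1 + tau/4) <= p^2] *)
have uP : p%:R `^ (1 + tau / 4) <= p%:R ^+ 2 :> R.
  by rewrite -powR_mulrn ?ler0n // ler_powR ?ler1n 1?ltnW //; lra.
have : (p%:R ^+ 2)^-1 <= (p%:R `^ (1 + tau / 4))^-1 :> R by rewrite lef_pV2 ?posrE ?exprn_gt0.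
rewrite /loss /= mul0r subr0 expr1n mul1r !div1r -exprVn.
set q := p%:R^-1; set w := (p%:R `^ (1 + tau / 4))^-1 => qw.
have q0 : 0 <= q by rewrite invr_ge0 ltW.
nra.
Qed.

End Loss.

Lemma exists_profitable_restriction {R : realType} {tau : R} {G : gcd_graph R} {p : nat} :
  0 <= tau <= 4 -> is_gcd_graph G -> nontrivial G -> structured G -> inRplus G p ->
  exists sv sw (i j : nat), [/\ valuation_data G p sv sw i j,
    0 < mu_theta_restrict (2 + tau) G p sv sw &
    mu_theta (2 + tau) G * loss tau p ((i%:Z == j%:Z) && (0 < i%:Z)) <=
    mu_theta_restrict (2 + tau) G p sv sw * p%:R ^+ absz (i%:Z - j%:Z)].
Proof.
move=> tau04 gG ntG sG pRp; have p_gt1 := prime_gt1 pRp.1.1.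
have P0 : 0 < p%:R :> R by rewrite ltr0n ltnW.
suff [sv [sw [i [j [data key]]]]] : exists sv sw (i j : nat), valuation_data G p sv sw i j /\
    mu_theta (2 + tau) G * loss tau p ((i%:Z == j%:Z) && (0 < i%:Z)) <=
    mu_theta_restrict (2 + tau) G p sv sw * p%:R ^+ absz (i%:Z - j%:Z).
  exists sv, sw, i, j; split=> //.
  have: 0 < mu_theta (2 + tau) G * loss tau p ((i%:Z == j%:Z) && (0 < i%:Z)).
    by rewrite mulr_gt0 ?mu_theta_gt0 ?loss_gt0 //; case/andP: tau04.
  by move/lt_le_trans/(_ key); rewrite pmulr_lgt0 // exprn_gt0.
have [K levels] := inRplus_level gG sG pRp.
have th1 : 1 < 2 + tau by move: tau04 => /andP[]; lra.
have [key|key|key] := pigeonhole3 (mu_theta_ge0 gG _) (mu_theta_level_split gG levels th1)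
  (loss_sum tau04 p_gt1).
- exists (>= K.+1%:Z), (>= K.+1%:Z), K.+1, K.+1; split.
    by split=> // e /levels; lia.
  by rewrite eqxx subrr expr0 mulr1.
- exists (pred1 K%:Z), (>= K.+1%:Z), K, K.+1; split.
    by split=> [x /eqP->|//|e _ /= /eqP-> ?]; lia.
  have -> : (K%:Z == K.+1%:Z) = false by lia.
  have -> : absz (K%:Z - K.+1%:Z) = 1%N by lia.
  by rewrite expr1 -ler_pdivrMr // -mulrA.
- exists (>= K.+1%:Z), (pred1 K%:Z), K.+1, K; split.
    by split=> [//|x /eqP->|e _ /= ? /eqP->]; lia.
  have -> : (K.+1%:Z == K%:Z) = false by lia.
  have -> : absz (K.+1%:Z - K%:Z) = 1%N by lia.
  by rewrite expr1 -ler_pdivrMr // -mulrA.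
Qed.

Local Open Scope fset_scope.

Theorem proposition7p17 (R : realType) (tau M : R) (G : gcd_graph R) :
  0 < tau -> tau < 1 / 100 -> 2 <= M ->
  is_gcd_graph G -> nontrivial G -> structured G ->
  (forall p, inR G p -> C6 tau M < p%:R) ->
  (exists p, inRplus G p) ->
  exists G' : gcd_graph R,
    [/\ gcd_subgraph G' G /\ denominator_exact G' G,
        (* (a) *)
        nontrivial G' /\ maximal (2 + tau) G',
        (* (b) *)
        [/\ gP G `<` gP G',
            (forall p, p \in gP G' -> p \in gP G \/ inRplus G p),
            (forall p, inRplus G' p -> inRplus G p),
            (exists p, inRplus G p /\ ~ inRplus G' p) &
            (forall p, inRminus G' p -> inRminus G p)],
        (* (c) *)
        (forall p, p \in gP G' `\` gP G -> 0 <= gf G' p /\ 0 <= gg G' p) &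
        (* (d) *)
        quality (2 + tau) G *
          \prod_(p <- gP G' `\` gP G)
            ((1 - ((gf G' p == gg G' p) && (0 < gf G' p))%:R / p%:R) ^+ 2 *
             (1 - 1 / (p%:R `^ (1 + tau / 4))))
        <= quality (2 + tau) G'].
Proof.
move=> tau_gt0 tau_lt _ gG ntG sG _ [p pRp].
have [p_prime [pNP _]] := pRp.1.
have tau04 : (0 <= tau <= 4)%R by apply/andP; split; lra.
have [sv [sw [i [j [data restr_gt0 key]]]]] :=
  exists_profitable_restriction tau04 gG ntG sG pRp.
have [V [W [E [sub max]]]] := exists_max_subgraph (mutheta (2 + tau) (gmu G))
  (restrict p sv (gV G)) (restrict p sw (gW G)) (restrict_edges p sv sw (gE G)).
have restr_le := max _ _ _ (restrict_is_subgraph gG sv sw).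
have G'sub := extend_gcd_subgraph gG p_prime pNP data sub.
have [G'gcd [_ [_ [_ [EE [PP _]]]]]] := G'sub.
exists (extend G p i j V W E); split.
- exact: (conj G'sub (extend_denominator_exact p_prime pNP data sub)).
- split=> [|V' W' E' VV' WW' EE']; last first.
    exact: max _ _ _ (is_subgraph_trans (And3 VV' WW' EE') sub).
  have th0 : (0 < 2 + tau)%R by lra.
  by apply: (nontrivial_of_mu_theta_gt0 th0); apply: lt_le_trans restr_gt0 restr_le.
- split.
  + by rewrite fproperEneq PP andbT; apply: contraNneq pNP => ->; rewrite fset1U1.
  + by move=> q /fset1UP[->|]; [right|left].
  + by move=> q; apply: inRplus_sub G'gcd sG EE PP.
  + by exists p; split=> // -[[_ []]]; rewrite /= fset1U1.
  + by move=> q; apply: inRminus_sub G'gcd sG EE PP.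
- by move=> q; rewrite extend_new_primes // => /fset1P->; rewrite /= !set_at_eq.
rewrite extend_new_primes // big_seq_fset1 /= !set_at_eq.
apply: extend_quality_ge => //; apply: le_trans key _.
by rewrite ler_wpM2r ?exprn_ge0.
Qed.
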